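(* Fix an integer $r\ge1$. Then: (1) as $\eta\to0^+$, \[ \xi_r^\ast(\eta)=2\log\left(4^r\eta\sqrt{\Psi^r(0)\prod_{k=1}^{r}\Psi^k(0)}\right)+O(\eta); \] (2) as $\eta\to0^+$, \[ \xi_r^\ast\left(\frac{1}{2^r}-\eta\right)=-2^r\log\left(2^{\,r-1+2^{1-r}}\eta\right)+O(\eta). \]
   Context: $\varphi(\xi)=\frac{\xi}{4}+\log\cosh\frac{\xi}{4}$ for $\xi\in\mathbb{R}$, and $\varphi^r$ is its $r$-fold composition; $\varphi^r$ is strictly increasing and strictly convex on $\mathbb{R}$, and its derivative $(\varphi^r)'$ is a strictly increasing bijection from $\mathbb{R}$ onto $(0,2^{-r})$. For $y\in(0,2^{-r})$, $\xi_r^\ast(y)$ denotes the unique real number with $(\varphi^r)'(\xi_r^\ast(y))=y$. For $X\in[0,\infty)$, $\Psi(X)=\frac{\sqrt{X}+1}{2}$, and $\Psi^k$ denotes the $k$-fold composition of $\Psi$. *)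

From Stdlib Require Import Reals Lra ClassicalEpsilon.
Open Scope R_scope.

Definition phi (xi : R) : R := xi / 4 + ln (cosh (xi / 4)).

Definition phi_iter (r : nat) : R -> R := Nat.iter r phi.

(* xi_r^*(y): the (unique, by the paper's context) real xi with (phi^r)'(xi) = y.
   Chosen by Hilbert's epsilon among the solutions of derivable_pt_lim. *)
Definition xi_star (r : nat) (y : R) : R :=
  epsilon (inhabits 0%R) (fun xi => derivable_pt_lim (phi_iter r) xi y).

Definition Psi (X : R) : R := (sqrt X + 1) / 2.
Definition Psi_iter (k : nat) : R -> R := Nat.iter k Psi.

Fixpoint prod_Psi (n : nat) : R :=
  match n with
  | O => 1
  | S m => prod_Psi m * Psi_iter (S m) 0
  end.

(* Everything rests on the conjugacy phi(t) = ln Psi(e^t), so that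
   phi^r(t) = ln Psi^r(e^t).  Writing D_r = (phi^r)' (a product of logistic
   factors along the orbit), the chain rule in the conjugate coordinate gives
   the closed form
       (CF)   (4^r D_r(t))^2 * G_r(e^t) = e^t,   G_r(x) = Psi^r(x) prod_{k=1}^r Psi^k(x).
   D_r is continuous and, for r >= 1, strictly increasing; hence xi_star r y is
   the unique solution of D_r(t) = y, and the intermediate value theorem places
   it in any interval on whose ends D_r brackets y (xi_star_between).
   (1) For y = eta -> 0 the solution t is <= 0 and, by (CF),
       t - 2 ln(4^r eta sqrt(G_r(0))) = ln G_r(e^t) - ln G_r(0) = O(sqrt(e^t)) = O(eta),
       because each Psi^k moves by at most sqrt(x)/2 on [0, x].
   (2) For y = 2^{-r} - eta the solution t is >= 0.  With e = Psi^{r-1}(e^t)^{-1/2},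
       the gap 1 - 2^r D_r(t) = 2^r eta is squeezed between e/(1+e) and
       e + (r-1) e^2, while ln Psi^{r-1}(e^t) = t/2^{r-1} - 2 ln 2 (1 - 2^{1-r}) + O(e^2);
       eliminating e gives the second expansion. *)

From Stdlib Require Import Reals Lra Lia ClassicalEpsilon.
From Coquelicot Require Import Coquelicot.
Open Scope R_scope.

Lemma ln_le_sub1 (y : R) : 0 < y -> ln y <= y - 1.
Proof. intros Hy. pose proof (exp_ineq1_le (ln y)) as Htan. rewrite exp_ln in Htan by exact Hy. lra. Qed.

Lemma ln_diff_le (a b : R) : 0 < a -> 0 < b -> ln b - ln a <= (b - a) / a.
Proof.
  intros Ha Hb. rewrite <- ln_div by lra.
  replace ((b - a) / a) with (b / a - 1) by (field; lra).
  apply ln_le_sub1, Rdiv_lt_0_compat; lra.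
Qed.

Lemma exp_le_compat (a b : R) : a <= b -> exp a <= exp b.
Proof. intros [H|H]; [left; apply exp_increasing; exact H | subst; lra]. Qed.

Lemma sqrt_exp (t : R) : sqrt (exp t) = exp (t / 2).
Proof.
  replace (exp t) with (exp (t / 2) * exp (t / 2)) by (rewrite <- exp_plus; f_equal; field).
  apply sqrt_square. pose proof (exp_pos (t / 2)); lra.
Qed.

Lemma ln_sqrt (x : R) : 0 < x -> ln (sqrt x) = ln x / 2.
Proof.
  intros Hx. pose proof (sqrt_lt_R0 x Hx).
  rewrite <- (sqrt_sqrt x) at 2 by lra. rewrite ln_mult by lra. field.
Qed.

Lemma Psi_ge_half (X : R) : / 2 <= Psi X.
Proof. unfold Psi. pose proof (sqrt_pos X). lra. Qed.

Lemma Psi_pos (X : R) : 0 < Psi X.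
Proof. pose proof (Psi_ge_half X). lra. Qed.

Lemma Psi_lt (a b : R) : 0 <= a < b -> Psi a < Psi b.
Proof. intros H. unfold Psi. pose proof (sqrt_lt_1_alt a b H). lra. Qed.

Lemma Psi_le (a b : R) : 0 <= a <= b -> Psi a <= Psi b.
Proof. intros H. unfold Psi. pose proof (sqrt_le_1_alt a b ltac:(lra)). lra. Qed.

Lemma Psi_1 : Psi 1 = 1.
Proof. unfold Psi. rewrite sqrt_1. lra. Qed.

Lemma Psi_iter_S (k : nat) (x : R) : Psi_iter (S k) x = Psi (Psi_iter k x).
Proof. reflexivity. Qed.

Lemma Psi_iter_pos (k : nat) (x : R) : 0 < x -> 0 < Psi_iter k x.
Proof. destruct k; intros; [exact H | apply Psi_pos]. Qed.

Lemma Psi_iter_nonneg (k : nat) (x : R) : 0 <= x -> 0 <= Psi_iter k x.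
Proof. destruct k; intros; [exact H | left; apply Psi_pos]. Qed.

Lemma Psi_iter_le (k : nat) (a b : R) : 0 <= a <= b -> Psi_iter k a <= Psi_iter k b.
Proof.
  intros H. induction k as [|k IH]; [simpl; lra|].
  rewrite !Psi_iter_S. apply Psi_le. split; [apply Psi_iter_nonneg|]; lra.
Qed.

Lemma Psi_iter_1 (k : nat) : Psi_iter k 1 = 1.
Proof. induction k as [|k IH]; [reflexivity|]. rewrite Psi_iter_S, IH. apply Psi_1. Qed.

Lemma phi_conj (t : R) : phi t = ln (Psi (exp t)).
Proof.
  unfold phi, Psi, cosh. rewrite sqrt_exp.
  pose proof (exp_pos (t / 4)). pose proof (exp_pos (- (t / 4))).
  rewrite <- (ln_exp (t / 4)) at 1. rewrite <- ln_mult by lra. f_equal.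
  replace (exp (t / 2)) with (exp (t / 4) * exp (t / 4))
    by (rewrite <- exp_plus; f_equal; field).
  rewrite exp_Ropp. field. lra.
Qed.

Lemma phi_iter_conj (k : nat) (t : R) : phi_iter k t = ln (Psi_iter k (exp t)).
Proof.
  induction k as [|k IH]; [simpl; rewrite ln_exp; reflexivity|].
  change (phi (phi_iter k t) = ln (Psi (Psi_iter k (exp t)))).
  rewrite IH, phi_conj, exp_ln by (apply Psi_iter_pos, exp_pos). reflexivity.
Qed.

Lemma phi_iter_lt (r : nat) (a b : R) : a < b -> phi_iter r a < phi_iter r b.
Proof.
  intros H. rewrite !phi_iter_conj. apply ln_increasing; [apply Psi_iter_pos, exp_pos|].
  induction r as [|r IH]; [apply exp_increasing; exact H|].
  rewrite !Psi_iter_S. apply Psi_lt. split; [apply Psi_iter_nonneg; left; apply exp_pos|exact IH].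
Qed.

Definition phi_deriv (t : R) : R := / (2 * (1 + exp (- t / 2))).

Lemma phi_derivable (t : R) : derivable_pt_lim phi t (phi_deriv t).
Proof.
  apply is_derive_Reals. unfold phi. auto_derive.
  - unfold cosh. pose proof (exp_pos (t * / 4)). pose proof (exp_pos (- (t * / 4))). lra.
  - unfold phi_deriv, cosh, sinh.
    replace (exp (- t / 2)) with (/ (exp (t / 4) * exp (t / 4)))
      by (rewrite <- exp_plus, <- exp_Ropp; f_equal; field).
    replace (t * / 4) with (t / 4) by field.
    rewrite exp_Ropp. pose proof (exp_pos (t / 4)). field. nra.
Qed.

Lemma phi_deriv_continuous (t : R) : continuity_pt phi_deriv t.
Proof. unfold phi_deriv. reg. all: pose proof (exp_pos (- t / 2)); lra. Qed.

Lemma phi_deriv_pos (t : R) : 0 < phi_deriv t.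
Proof. unfold phi_deriv. pose proof (exp_pos (- t / 2)). apply Rinv_0_lt_compat; lra. Qed.

Lemma phi_deriv_le_half (t : R) : phi_deriv t <= / 2.
Proof. unfold phi_deriv. pose proof (exp_pos (- t / 2)). apply Rinv_le_contravar; lra. Qed.

Lemma phi_deriv_lt (a b : R) : a < b -> phi_deriv a < phi_deriv b.
Proof.
  intros H. unfold phi_deriv.
  assert (exp (- b / 2) < exp (- a / 2)) by (apply exp_increasing; lra).
  pose proof (exp_pos (- b / 2)). apply Rinv_lt_contravar; nra.
Qed.

Lemma phi_deriv_ln (Q : R) : 0 < Q -> phi_deriv (ln Q) = / (2 * (1 + / sqrt Q)).
Proof.
  intros HQ. unfold phi_deriv. do 3 f_equal.
  rewrite <- (exp_ln Q HQ) at 2. rewrite sqrt_exp, <- exp_Ropp. f_equal; field.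
Qed.

(* The one-step identity behind (CF): phi'(ln Q) * 4 Psi(Q) = sqrt Q. *)
Lemma phi_deriv_ln_Psi (Q : R) : 0 < Q -> phi_deriv (ln Q) * (4 * Psi Q) = sqrt Q.
Proof.
  intros HQ. rewrite phi_deriv_ln by exact HQ. unfold Psi.
  pose proof (sqrt_lt_R0 Q HQ). field. lra.
Qed.

(* D_r = (phi^r)', computed by the chain rule as a product along the orbit. *)
Fixpoint phi_iter_deriv (r : nat) (t : R) : R :=
  match r with
  | O => 1
  | S m => phi_deriv (phi_iter m t) * phi_iter_deriv m t
  end.

Lemma phi_iter_derivable (r : nat) (t : R) :
  derivable_pt_lim (phi_iter r) t (phi_iter_deriv r t).
Proof.
  induction r as [|r IH]; simpl.
  - apply derivable_pt_lim_id.
  - apply (derivable_pt_lim_comp (phi_iter r) phi); [exact IH | apply phi_derivable].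
Qed.

Lemma phi_iter_deriv_continuous (r : nat) : continuity (phi_iter_deriv r).
Proof.
  intro t. induction r as [|r IH]; simpl.
  - apply continuity_pt_const. intros a b; reflexivity.
  - apply (continuity_pt_mult (fun t => phi_deriv (phi_iter r t))); [|exact IH].
    apply (continuity_pt_comp (phi_iter r) phi_deriv); [|apply phi_deriv_continuous].
    apply derivable_continuous_pt. exists (phi_iter_deriv r t). apply phi_iter_derivable.
Qed.

Lemma phi_iter_deriv_pos (r : nat) (t : R) : 0 < phi_iter_deriv r t.
Proof.
  induction r as [|r IH]; simpl; [lra|].
  pose proof (phi_deriv_pos (phi_iter r t)). nra.
Qed.

Lemma phi_iter_deriv_lt (r : nat) (a b : R) : a < b ->
  phi_iter_deriv (S r) a < phi_iter_deriv (S r) b.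
Proof.
  intros H. induction r as [|r IH].
  - simpl. rewrite !Rmult_1_r. apply phi_deriv_lt. exact H.
  - change (phi_deriv (phi_iter (S r) a) * phi_iter_deriv (S r) a <
            phi_deriv (phi_iter (S r) b) * phi_iter_deriv (S r) b).
    pose proof (phi_deriv_lt _ _ (phi_iter_lt (S r) a b H)).
    pose proof (phi_deriv_pos (phi_iter (S r) a)).
    pose proof (phi_iter_deriv_pos (S r) a). nra.
Qed.

Lemma xi_star_eq (r : nat) (y z : R) : (1 <= r)%nat ->
  phi_iter_deriv r z = y -> xi_star r y = z.
Proof.
  intros Hr Hz. destruct r as [|m]; [lia|].
  assert (Hex : exists x, derivable_pt_lim (phi_iter (S m)) x y)
    by (exists z; rewrite <- Hz; apply phi_iter_derivable).
  pose proof (epsilon_spec (inhabits 0)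
    (fun xi => derivable_pt_lim (phi_iter (S m)) xi y) Hex) as Hspec.
  fold (xi_star (S m) y) in Hspec.
  assert (Hval : phi_iter_deriv (S m) (xi_star (S m) y) = y)
    by (eapply uniqueness_limite; [apply phi_iter_derivable | exact Hspec]).
  destruct (Rtotal_order (xi_star (S m) y) z) as [Hlt|[Heq|Hgt]]; [|exact Heq|].
  - apply (phi_iter_deriv_lt m) in Hlt. lra.
  - apply (phi_iter_deriv_lt m) in Hgt. lra.
Qed.

Lemma xi_star_between (r : nat) (y a b : R) : (1 <= r)%nat -> a <= b ->
  phi_iter_deriv r a <= y <= phi_iter_deriv r b ->
  a <= xi_star r y <= b /\ phi_iter_deriv r (xi_star r y) = y.
Proof.
  intros Hr Hab Hy.
  destruct (IVT_cor (fun t => phi_iter_deriv r t - y) a b) as (z & Hz & Hroot).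
  - apply continuity_minus; [apply phi_iter_deriv_continuous|].
    apply continuity_const. intros u v; reflexivity.
  - exact Hab.
  - assert (phi_iter_deriv r a - y <= 0) by lra.
    assert (0 <= phi_iter_deriv r b - y) by lra. simpl. nra.
  - rewrite (xi_star_eq r y z) by (try exact Hr; simpl in Hroot; lra).
    simpl in Hroot. split; [exact Hz | lra].
Qed.

Fixpoint Psi_prod (n : nat) (x : R) : R :=
  match n with
  | O => 1
  | S m => Psi_prod m x * Psi_iter (S m) x
  end.

(* The factor G_r of (CF); G_r(0) is the constant of expansion (1). *)
Definition G (r : nat) (x : R) : R := Psi_iter r x * Psi_prod r x.

Lemma Psi_prod_0 (n : nat) : Psi_prod n 0 = prod_Psi n.
Proof. induction n as [|n IH]; simpl; [reflexivity | rewrite IH; reflexivity]. Qed.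

Lemma Psi_prod_pos (n : nat) (x : R) : 0 < Psi_prod n x.
Proof.
  induction n as [|n IH]; simpl; [lra|].
  pose proof (Psi_pos (Psi_iter n x)). change (0 < Psi_prod n x * Psi (Psi_iter n x)). nra.
Qed.

Lemma G_pos (r : nat) (x : R) : 0 < x -> 0 < G r x.
Proof.
  intros Hx. unfold G. pose proof (Psi_iter_pos r x Hx). pose proof (Psi_prod_pos r x). nra.
Qed.

Lemma G_0_pos (r : nat) : (1 <= r)%nat -> 0 < G r 0.
Proof.
  intros Hr. destruct r as [|r]; [lia|]. unfold G. rewrite Psi_iter_S.
  pose proof (Psi_pos (Psi_iter r 0)). pose proof (Psi_prod_pos (S r) 0). nra.
Qed.

Lemma Psi_prod_1 (n : nat) : Psi_prod n 1 = 1.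
Proof. induction n as [|n IH]; cbn [Psi_prod]; [reflexivity|]. rewrite IH, Psi_iter_1. ring. Qed.

Lemma G_1 (r : nat) : G r 1 = 1.
Proof. unfold G. rewrite Psi_iter_1, Psi_prod_1. ring. Qed.

Lemma Psi_prod_le (n : nat) (a b : R) : 0 <= a <= b -> Psi_prod n a <= Psi_prod n b.
Proof.
  intros H. induction n as [|n IH]; cbn [Psi_prod]; [lra|].
  pose proof (Psi_prod_pos n a). pose proof (Psi_iter_le (S n) a b H).
  pose proof (Psi_iter_nonneg (S n) a ltac:(lra)). nra.
Qed.

Lemma G_le (r : nat) (a b : R) : 0 <= a <= b -> G r a <= G r b.
Proof.
  intros H. unfold G. pose proof (Psi_iter_le r a b H). pose proof (Psi_prod_le r a b H).
  pose proof (Psi_iter_nonneg r a ltac:(lra)). pose proof (Psi_prod_pos r a). nra.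
Qed.

Lemma phi_iter_deriv_closed (r : nat) (t : R) :
  (4 ^ r * phi_iter_deriv r t) ^ 2 * G r (exp t) = exp t.
Proof.
  induction r as [|r IH]; [unfold G; simpl; ring|].
  unfold G in *. cbn [phi_iter_deriv Psi_prod]. rewrite Psi_iter_S, phi_iter_conj.
  set (Q := Psi_iter r (exp t)) in *.
  assert (HQ : 0 < Q) by (apply Psi_iter_pos, exp_pos).
  pose proof (phi_deriv_ln_Psi Q HQ) as Hstep.
  pose proof (sqrt_sqrt Q ltac:(lra)) as HsQ.
  change (4 ^ S r) with (4 * 4 ^ r).
  transitivity ((phi_deriv (ln Q) * (4 * Psi Q)) ^ 2
                * ((4 ^ r * phi_iter_deriv r t) ^ 2 * Psi_prod r (exp t))); [ring|].
  rewrite Hstep. etransitivity; [|exact IH].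
  transitivity (sqrt Q * sqrt Q * ((4 ^ r * phi_iter_deriv r t) ^ 2 * Psi_prod r (exp t)));
    [ring | rewrite HsQ; ring].
Qed.

Lemma phi_iter_deriv_log (r : nat) (t : R) :
  t = 2 * ln (4 ^ r * phi_iter_deriv r t) + ln (G r (exp t)).
Proof.
  pose proof (phi_iter_deriv_pos r t). pose proof (pow_lt 4 r ltac:(lra)).
  pose proof (G_pos r _ (exp_pos t)).
  rewrite <- (ln_exp t) at 1. rewrite <- (phi_iter_deriv_closed r t) at 1.
  rewrite ln_mult, ln_pow by (try apply pow_lt; nra). simpl INR. ring.
Qed.

(* At the fixed point t = 0 (e^0 = 1), (CF) gives D_r(0) = 4^{-r}. *)
Lemma phi_iter_deriv_0 (r : nat) : phi_iter_deriv r 0 = / 4 ^ r.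
Proof.
  pose proof (phi_iter_deriv_closed r 0) as E. rewrite exp_0, G_1, Rmult_1_r in E.
  pose proof (phi_iter_deriv_pos r 0). pose proof (pow_lt 4 r ltac:(lra)).
  assert (Hone : 4 ^ r * phi_iter_deriv r 0 = 1).
  { assert (Hfactor : (4 ^ r * phi_iter_deriv r 0 - 1) * (4 ^ r * phi_iter_deriv r 0 + 1) = 0)
      by nra.
    apply Rmult_integral in Hfactor. nra. }
  field_simplify_eq; lra.
Qed.

Lemma mul_increment_le (a b c d : R) :
  0 <= a <= b -> b <= 1 -> 0 <= c <= d -> d <= 1 -> b * d - a * c <= (b - a) + (d - c).
Proof. intros. nra. Qed.

Lemma Psi_contract (a b : R) : / 4 <= b <= a -> Psi a - Psi b <= (a - b) / 2.
Proof.
  intros H. unfold Psi.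
  pose proof (sqrt_sqrt a ltac:(lra)). pose proof (sqrt_sqrt b ltac:(lra)).
  pose proof (sqrt_le_1_alt b a ltac:(lra)).
  assert (/ 2 <= sqrt b).
  { rewrite <- (sqrt_square (/ 2)) by lra. apply sqrt_le_1_alt. lra. }
  assert (sqrt a - sqrt b <= (sqrt a - sqrt b) * (sqrt a + sqrt b)) by nra.
  lra.
Qed.

Lemma Psi_iter_le_1 (k : nat) (x : R) : 0 <= x <= 1 -> Psi_iter k x <= 1.
Proof. intros. rewrite <- (Psi_iter_1 k). apply Psi_iter_le. lra. Qed.

Lemma Psi_iter_increment (k : nat) (x : R) : 0 <= x <= 1 ->
  Psi_iter (S k) x - Psi_iter (S k) 0 <= sqrt x / 2.
Proof.
  intros Hx. induction k as [|k IH].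
  - simpl. unfold Psi. rewrite sqrt_0. lra.
  - rewrite (Psi_iter_S (S k) x), (Psi_iter_S (S k) 0).
    pose proof (Psi_ge_half (Psi_iter k 0)). pose proof (Psi_iter_le (S k) 0 x ltac:(lra)).
    pose proof (Psi_contract (Psi_iter (S k) x) (Psi_iter (S k) 0)).
    pose proof (Psi_iter_le_1 (S k) x Hx). simpl in *. lra.
Qed.

Lemma Psi_prod_le_1 (n : nat) (x : R) : 0 <= x <= 1 -> Psi_prod n x <= 1.
Proof. intros. rewrite <- (Psi_prod_1 n). apply Psi_prod_le. lra. Qed.

Lemma Psi_prod_increment (n : nat) (x : R) : 0 <= x <= 1 ->
  Psi_prod n x - Psi_prod n 0 <= INR n * sqrt x / 2.
Proof.
  intros Hx. induction n as [|n IH]; [simpl; lra|].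
  cbn [Psi_prod]. rewrite S_INR.
  pose proof (mul_increment_le (Psi_prod n 0) (Psi_prod n x)
                (Psi_iter (S n) 0) (Psi_iter (S n) x)).
  pose proof (Psi_prod_pos n 0). pose proof (Psi_prod_le n 0 x ltac:(lra)).
  pose proof (Psi_prod_le_1 n x Hx). pose proof (Psi_iter_nonneg (S n) 0 ltac:(lra)).
  pose proof (Psi_iter_le (S n) 0 x ltac:(lra)). pose proof (Psi_iter_le_1 (S n) x Hx).
  pose proof (Psi_iter_increment n x Hx). lra.
Qed.

Lemma G_increment (r : nat) (x : R) : (1 <= r)%nat -> 0 <= x <= 1 ->
  G r x - G r 0 <= (INR r + 1) * sqrt x / 2.
Proof.
  intros Hr Hx. destruct r as [|m]; [lia|]. unfold G.
  pose proof (mul_increment_le (Psi_iter (S m) 0) (Psi_iter (S m) x)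
                (Psi_prod (S m) 0) (Psi_prod (S m) x)).
  pose proof (Psi_prod_pos (S m) 0). pose proof (Psi_prod_le (S m) 0 x ltac:(lra)).
  pose proof (Psi_prod_le_1 (S m) x Hx). pose proof (Psi_iter_nonneg (S m) 0 ltac:(lra)).
  pose proof (Psi_iter_le (S m) 0 x ltac:(lra)). pose proof (Psi_iter_le_1 (S m) x Hx).
  pose proof (Psi_iter_increment m x Hx). pose proof (Psi_prod_increment (S m) x Hx).
  lra.
Qed.

Lemma small_eta_error (r : nat) (t : R) : (1 <= r)%nat -> t <= 0 ->
  Rabs (t - 2 * ln (4 ^ r * phi_iter_deriv r t * sqrt (G r 0)))
  <= (INR r + 1) * 4 ^ r / (2 * G r 0) * phi_iter_deriv r t.
Proof.
  intros Hr Ht.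
  set (K := G r 0). set (x := exp t). set (p := 4 ^ r * phi_iter_deriv r t).
  assert (HK : 0 < K) by exact (G_0_pos r Hr).
  assert (Hp : 0 < p) by (apply Rmult_lt_0_compat; [apply pow_lt; lra | apply phi_iter_deriv_pos]).
  assert (Hx : 0 < x <= 1)
    by (split; [apply exp_pos | unfold x; rewrite <- exp_0; apply exp_le_compat; exact Ht]).
  assert (HKG : K <= G r x) by (apply G_le; lra).
  assert (Hlog : t - 2 * ln (p * sqrt K) = ln (G r x) - ln K).
  { rewrite (phi_iter_deriv_log r t) at 1. fold x p.
    rewrite ln_mult, ln_sqrt by (try apply sqrt_lt_R0; lra). field. }
  assert (Hsqrt : sqrt x <= p).
  { rewrite <- (sqrt_square p) by lra. apply sqrt_le_1_alt.
    unfold x. rewrite <- (phi_iter_deriv_closed r t). fold x p.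
    pose proof (G_le r x 1 ltac:(lra)) as HG1. rewrite G_1 in HG1. nra. }
  pose proof (ln_diff_le K (G r x) HK ltac:(lra)) as Hln_up.
  pose proof (ln_le K (G r x) HK HKG) as Hln_low.
  pose proof (G_increment r x Hr ltac:(lra)) as Hinc. fold K in Hinc.
  pose proof (pos_INR r).
  rewrite Hlog, Rabs_pos_eq by lra.
  apply (Rle_trans _ ((G r x - K) / K)); [exact Hln_up|].
  replace ((INR r + 1) * 4 ^ r / (2 * K) * phi_iter_deriv r t)
    with ((INR r + 1) * p / 2 / K) by (unfold p; field; lra).
  apply Rmult_le_compat_r; [left; apply Rinv_0_lt_compat; lra | nra].
Qed.

(* For 0 < eta < 4^{-r}, the solution of D_r = eta lies in (-oo, 0]: D_r(0) = 4^{-r}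
   and, by (CF) with G_r >= G_r(0), D_r is below eta at ln((4^r eta)^2 G_r(0)). *)
Lemma xi_star_small (r : nat) (eta : R) : (1 <= r)%nat -> 0 < eta < / 4 ^ r ->
  xi_star r eta <= 0 /\ phi_iter_deriv r (xi_star r eta) = eta.
Proof.
  intros Hr Heta.
  set (K := G r 0). set (a := ln ((4 ^ r * eta) ^ 2 * K)).
  assert (HK : 0 < K <= 1)
    by (split; [exact (G_0_pos r Hr) | rewrite <- (G_1 r); apply G_le; lra]).
  assert (H4 : 0 < 4 ^ r) by (apply pow_lt; lra).
  assert (Hsmall : 0 < 4 ^ r * eta < 1).
  { destruct Heta as [Heta0 Heta1]. split; [nra|].
    apply (Rmult_lt_compat_l (4 ^ r)) in Heta1; [|exact H4].
    rewrite Rinv_r in Heta1; lra. }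
  assert (Hsq : 0 < (4 ^ r * eta) ^ 2 <= 1).
  { simpl. rewrite Rmult_1_r. split; nra. }
  assert (Ha : a <= 0).
  { unfold a. rewrite <- ln_1. apply ln_le; nra. }
  assert (HDa : phi_iter_deriv r a <= eta).
  { pose proof (phi_iter_deriv_closed r a) as E.
    unfold a at 3 in E. rewrite exp_ln in E by (apply Rmult_lt_0_compat; lra).
    pose proof (G_le r 0 (exp a) ltac:(pose proof (exp_pos a); lra)) as HKG. fold K in HKG.
    pose proof (phi_iter_deriv_pos r a).
    assert (Hsq_le : (4 ^ r * phi_iter_deriv r a) ^ 2 <= (4 ^ r * eta) ^ 2).
    { apply (Rmult_le_reg_r K); [lra|]. rewrite <- E.
      apply Rmult_le_compat_l; [apply pow2_ge_0 | exact HKG]. }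
    rewrite <- !Rsqr_pow2 in Hsq_le. apply Rsqr_incr_0_var in Hsq_le; [|nra].
    apply (Rmult_le_reg_l (4 ^ r)); assumption. }
  assert (HD0 : eta <= phi_iter_deriv r 0) by (rewrite phi_iter_deriv_0; lra).
  destruct (xi_star_between r eta a 0 Hr Ha (conj HDa HD0)) as [[_ Hle] Hval].
  split; [exact Hle | exact Hval].
Qed.

Lemma small_eta_expansion (r : nat) (hr : (1 <= r)%nat) :
  exists C delta : R, 0 < C /\ 0 < delta /\
     forall eta : R, 0 < eta < delta ->
       Rabs (xi_star r eta
             - 2 * ln (4 ^ r * eta * sqrt (Psi_iter r 0 * prod_Psi r)))
       <= C * eta.
Proof.
  pose proof (G_0_pos r hr) as HK. pose proof (pow_lt 4 r ltac:(lra)) as H4.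
  pose proof (pos_INR r).
  exists ((INR r + 1) * 4 ^ r / (2 * G r 0)), (/ 4 ^ r).
  split; [apply Rdiv_lt_0_compat; nra|]. split; [apply Rinv_0_lt_compat; exact H4|].
  intros eta Heta.
  destruct (xi_star_small r eta hr Heta) as [Hle Hval].
  rewrite <- Psi_prod_0. fold (G r 0). rewrite <- Hval at 2 3.
  apply small_eta_error; assumption.
Qed.

Lemma Psi_iter_ge_1 (k : nat) (x : R) : 1 <= x -> 1 <= Psi_iter k x.
Proof. intros. rewrite <- (Psi_iter_1 k). apply Psi_iter_le. lra. Qed.

Lemma exp_ge_1 (t : R) : 0 <= t -> 1 <= exp t.
Proof. intros Ht. rewrite <- exp_0. apply exp_le_compat. exact Ht. Qed.

(* The small parameter of regime (2): eps k t = Psi^k(e^t)^(-1/2), which tends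
   to 0 as t -> +oo. *)
Definition eps (k : nat) (t : R) : R := / sqrt (Psi_iter k (exp t)).

Lemma eps_range (k : nat) (t : R) : 0 <= t -> 0 < eps k t <= 1.
Proof.
  intros Ht. unfold eps.
  pose proof (Psi_iter_ge_1 k _ (exp_ge_1 t Ht)) as HQ.
  assert (1 <= sqrt (Psi_iter k (exp t))) by (rewrite <- sqrt_1; apply sqrt_le_1_alt; exact HQ).
  split; [apply Rinv_0_lt_compat; lra | rewrite <- Rinv_1; apply Rinv_le_contravar; lra].
Qed.

Lemma eps_sq (k : nat) (t : R) : eps k t ^ 2 = / Psi_iter k (exp t).
Proof.
  unfold eps. pose proof (Psi_iter_pos k _ (exp_pos t)) as HQ.
  rewrite pow_inv, <- Rsqr_pow2, Rsqr_sqrt by lra.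
  reflexivity.
Qed.

Lemma ln_eps (k : nat) (t : R) : ln (eps k t) = - ln (Psi_iter k (exp t)) / 2.
Proof.
  unfold eps. pose proof (Psi_iter_pos k _ (exp_pos t)) as HQ.
  rewrite ln_Rinv, ln_sqrt by (try apply sqrt_lt_R0; exact HQ). field.
Qed.

Lemma phi_deriv_eps (k : nat) (t : R) : 2 * phi_deriv (phi_iter k t) = / (1 + eps k t).
Proof.
  pose proof (Psi_iter_pos k _ (exp_pos t)) as HQ.
  rewrite phi_iter_conj, phi_deriv_ln by exact HQ. unfold eps.
  pose proof (sqrt_lt_R0 _ HQ) as Hs. pose proof (Rinv_0_lt_compat _ Hs).
  field. lra.
Qed.

(* Each further iteration of Psi takes a square root, so eps k <= (eps (k+1))^2. *)
Lemma eps_step (k : nat) (t : R) : 0 <= t -> eps k t <= eps (S k) t ^ 2.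
Proof.
  intros Ht. rewrite eps_sq, Psi_iter_S. unfold eps, Psi.
  pose proof (Psi_iter_ge_1 k _ (exp_ge_1 t Ht)) as HQ.
  assert (1 <= sqrt (Psi_iter k (exp t))) by (rewrite <- sqrt_1; apply sqrt_le_1_alt; exact HQ).
  apply Rinv_le_contravar; lra.
Qed.

Lemma pow2_deriv_range (k : nat) (t : R) : 0 < 2 ^ k * phi_iter_deriv k t <= 1.
Proof.
  induction k as [|k IH]; simpl; [lra|].
  pose proof (phi_deriv_pos (phi_iter k t)). pose proof (phi_deriv_le_half (phi_iter k t)).
  pose proof (phi_iter_deriv_pos k t). nra.
Qed.

Lemma deriv_gap_bounds (m : nat) (t : R) : 0 <= t ->
  eps m t / (1 + eps m t) <= 1 - 2 ^ S m * phi_iter_deriv (S m) t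
  <= eps m t + INR m * eps m t ^ 2.
Proof.
  intros Ht. induction m as [|m IH].
  - replace (2 ^ 1 * phi_iter_deriv 1 t) with (2 * phi_deriv (phi_iter 0 t)) by (simpl; ring).
    rewrite phi_deriv_eps. pose proof (eps_range 0 t Ht). simpl INR.
    replace (1 - / (1 + eps 0 t)) with (eps 0 t / (1 + eps 0 t)) by (field; lra).
    split; [lra|]. unfold Rdiv.
    assert (/ (1 + eps 0 t) <= 1) by (rewrite <- Rinv_1; apply Rinv_le_contravar; lra).
    nra.
  - replace (2 ^ S (S m) * phi_iter_deriv (S (S m)) t)
      with (2 * phi_deriv (phi_iter (S m) t) * (2 ^ S m * phi_iter_deriv (S m) t))
      by (simpl; ring).
    rewrite phi_deriv_eps, S_INR.
    pose proof (eps_range (S m) t Ht). pose proof (eps_range m t Ht).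
    pose proof (eps_step m t Ht). pose proof (pow2_deriv_range (S m) t). pose proof (pos_INR m).
    set (P := 2 ^ S m * phi_iter_deriv (S m) t) in *.
    set (e := eps m t) in *. set (e' := eps (S m) t) in *.
    replace (1 - / (1 + e') * P) with ((1 - P) + P * (e' / (1 + e'))) by (field; lra).
    assert (He' : 0 <= e' / (1 + e') <= e').
    { split; [apply Rdiv_le_0_compat; lra|].
      apply (Rmult_le_reg_r (1 + e')); [lra|]. unfold Rdiv.
      rewrite Rmult_assoc, Rinv_l by lra. nra. }
    assert (INR m * e ^ 2 <= INR m * e) by (apply Rmult_le_compat_l; nra).
    split; nra.
Qed.

(* ln Psi^k(x) = ln x / 2^k - 2 ln 2 (1 - 2^{-k}) + log_defect k x, where the
   defect is nonnegative and O(1/Psi^k(x)) for x >= 1. *)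
Definition log_defect (k : nat) (x : R) : R :=
  ln (Psi_iter k x) - ln x / 2 ^ k + 2 * ln 2 * (1 - / 2 ^ k).

Lemma ln_Psi (Q : R) : 0 < Q -> ln (Psi Q) = ln Q / 2 + ln (1 + / sqrt Q) - ln 2.
Proof.
  intros HQ. pose proof (sqrt_lt_R0 Q HQ) as Hs. pose proof (Rinv_0_lt_compat _ Hs).
  unfold Psi. replace (sqrt Q + 1) with (sqrt Q * (1 + / sqrt Q)) by (field; lra).
  rewrite ln_div, ln_mult, ln_sqrt by (try apply Rmult_lt_0_compat; lra). reflexivity.
Qed.

Lemma log_defect_S (k : nat) (x : R) : 0 < x ->
  log_defect (S k) x = log_defect k x / 2 + ln (1 + / sqrt (Psi_iter k x)).
Proof.
  intros Hx. unfold log_defect. rewrite Psi_iter_S, ln_Psi by (apply Psi_iter_pos; exact Hx).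
  pose proof (pow_lt 2 k ltac:(lra)). simpl pow. field. lra.
Qed.

Lemma log_defect_bounds (k : nat) (x : R) : 1 <= x ->
  0 <= log_defect k x <= 2 / Psi_iter k x.
Proof.
  intros Hx. induction k as [|k IH].
  - unfold log_defect. simpl. split; [lra|].
    unfold Rdiv. pose proof (Rinv_0_lt_compat x ltac:(lra)). lra.
  - rewrite log_defect_S by lra. rewrite Psi_iter_S.
    set (Q := Psi_iter k x) in *.
    assert (HQ : 1 <= Q) by (apply Psi_iter_ge_1; exact Hx).
    pose proof (sqrt_lt_R0 Q ltac:(lra)) as Hs. pose proof (sqrt_sqrt Q ltac:(lra)) as Hss.
    assert (Hs1 : 1 <= sqrt Q) by (rewrite <- sqrt_1; apply sqrt_le_1_alt; exact HQ).
    set (s := sqrt Q) in *. set (e := / s).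
    assert (He : 0 < e <= 1).
    { unfold e. split; [apply Rinv_0_lt_compat; lra|].
      rewrite <- Rinv_1. apply Rinv_le_contravar; lra. }
    assert (Hln1 : 0 <= ln (1 + e)) by (rewrite <- ln_1; apply ln_le; lra).
    assert (Hln2 : ln (1 + e) <= e) by (pose proof (ln_le_sub1 (1 + e) ltac:(lra)); lra).
    assert (HQe : 2 / Q = 2 * e * e) by (unfold e; rewrite <- Hss; field; lra).
    assert (HPsi : 2 / Psi Q = 4 / (s + 1)) by (unfold Psi; fold s; field; lra).
    assert (Hes : 2 * e <= 4 / (s + 1)).
    { unfold e. apply (Rmult_le_reg_r (s * (s + 1))); [nra|]. field_simplify; lra. }
    rewrite HPsi. rewrite HQe in IH. nra.
Qed.

(* eps m t decays like exp(-t / 2^{m+1}); this locates xi_star in regime (2). *)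
Lemma eps_decay (m : nat) (t : R) : 0 <= t -> eps m t <= 2 * exp (- (t / (2 * 2 ^ m))).
Proof.
  intros Ht. pose proof (log_defect_bounds m (exp t) (exp_ge_1 t Ht)) as [Hd _].
  unfold log_defect in Hd. rewrite ln_exp in Hd.
  pose proof (pow_lt 2 m ltac:(lra)). pose proof ln_lt_2.
  assert (Hq : 0 < / 2 ^ m) by (apply Rinv_0_lt_compat; lra).
  pose proof (eps_range m t Ht) as He.
  rewrite <- (exp_ln (eps m t)) by lra.
  replace (2 * exp (- (t / (2 * 2 ^ m)))) with (exp (ln 2 - t / 2 ^ m / 2))
    by (unfold Rminus; rewrite exp_plus, exp_ln by lra; f_equal; f_equal; field; lra).
  apply exp_le_compat. rewrite ln_eps.
  assert (0 <= 2 * ln 2 * / 2 ^ m) by (apply Rmult_le_pos; lra).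
  lra.
Qed.

Lemma ln_squeeze (c e S : R) : 0 <= c -> 0 < e ->
  e / (1 + e) <= S <= e + c * e ^ 2 -> Rabs (ln S - ln e) <= (c + 1) * e.
Proof.
  intros Hc He [Hlow Hup].
  assert (HS : 0 < S) by (pose proof (Rdiv_lt_0_compat e (1 + e) He ltac:(lra)); lra).
  assert (Hlow' : e <= S * (1 + e)).
  { apply (Rmult_le_compat_r (1 + e)) in Hlow; [|lra].
    unfold Rdiv in Hlow. rewrite Rmult_assoc, Rinv_l, Rmult_1_r in Hlow by lra. exact Hlow. }
  pose proof (ln_diff_le e S He HS) as Hup_ln.
  pose proof (ln_diff_le S e HS He) as Hlow_ln.
  assert ((S - e) / e <= c * e).
  { apply (Rmult_le_reg_r e); [exact He|]. unfold Rdiv.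
    rewrite Rmult_assoc, Rinv_l by lra. simpl in Hup. nra. }
  assert ((e - S) / S <= e).
  { apply (Rmult_le_reg_r S); [exact HS|]. unfold Rdiv.
    rewrite Rmult_assoc, Rinv_l by lra. nra. }
  apply Rabs_le. split; nra.
Qed.

Lemma large_eta_identity (m : nat) (t eta : R) : 0 < eta ->
  t - (- 2 ^ S m * ln (Rpower 2 (INR (S m) - 1 + Rpower 2 (1 - INR (S m))) * eta))
  = 2 ^ S m * (ln (2 ^ S m * eta) - ln (eps m t)) - 2 ^ m * log_defect m (exp t).
Proof.
  intros Heta. pose proof (pow_lt 2 m ltac:(lra)) as Hq.
  assert (HRp : Rpower 2 (1 - INR (S m)) = / 2 ^ m).
  { rewrite S_INR, <- Rpower_pow, <- Rpower_Ropp by lra. f_equal. ring. }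
  rewrite HRp, ln_mult, ln_mult, ln_pow, ln_eps, ln_Rpower by (try apply exp_pos; try apply pow_lt; lra).
  unfold log_defect. rewrite ln_exp, S_INR. simpl pow. field. lra.
Qed.

Lemma large_eta_error (r : nat) (t : R) : (1 <= r)%nat -> 0 <= t ->
  Rabs (t - (- 2 ^ r * ln (Rpower 2 (INR r - 1 + Rpower 2 (1 - INR r))
                            * (/ 2 ^ r - phi_iter_deriv r t))))
  <= 2 * (INR r + 1) * 4 ^ r * (/ 2 ^ r - phi_iter_deriv r t).
Proof.
  intros Hr Ht. destruct r as [|m]; [lia|].
  pose proof (pow_lt 2 m ltac:(lra)) as Hq. pose proof (pos_INR m) as Hm.
  assert (H4 : 4 ^ S m = 2 ^ S m * 2 ^ S m) by (rewrite <- Rpow_mult_distr; f_equal; ring).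
  set (eta := / 2 ^ S m - phi_iter_deriv (S m) t).
  set (e := eps m t). set (d := log_defect m (exp t)).
  pose proof (deriv_gap_bounds m t Ht) as Hgap. fold e in Hgap.
  pose proof (large_eta_identity m t eta) as Hid. fold e d in Hid.
  rewrite H4.
  set (q := 2 ^ m) in *. change (2 ^ S m) with (2 * q) in *.
  replace (1 - 2 * q * phi_iter_deriv (S m) t) with (2 * q * eta) in Hgap
    by (unfold eta; field; lra).
  pose proof (eps_range m t Ht) as He. fold e in He.
  assert (Heta : 0 < eta).
  { pose proof (Rdiv_lt_0_compat e (1 + e) ltac:(lra) ltac:(lra)). nra. }
  assert (He2 : e <= 2 * (2 * q * eta)).
  { assert (e <= 2 * q * eta * (1 + e)).
    { destruct Hgap as [Hlow _]. apply (Rmult_le_compat_r (1 + e)) in Hlow; [|lra].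
      unfold Rdiv in Hlow. rewrite Rmult_assoc, Rinv_l, Rmult_1_r in Hlow by lra. exact Hlow. }
    nra. }
  pose proof (ln_squeeze (INR m) e (2 * q * eta) Hm ltac:(lra) Hgap) as Hln.
  assert (Hd : 0 <= d <= 2 * e).
  { pose proof (log_defect_bounds m (exp t) (exp_ge_1 t Ht)) as [Hd0 Hd1]. fold d in Hd0, Hd1.
    pose proof (eps_sq m t) as Hsq. fold e in Hsq.
    rewrite <- (Rinv_inv (Psi_iter m (exp t))), <- Hsq in Hd1.
    unfold Rdiv in Hd1. rewrite Rinv_inv in Hd1. simpl in Hd1. nra. }
  rewrite (Hid Heta), S_INR. apply Rabs_le_between in Hln.
  set (X := ln (2 * q * eta) - ln e) in *.
  assert (HX : - (2 * q * ((INR m + 1) * e)) <= 2 * q * X <= 2 * q * ((INR m + 1) * e))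
    by (split; nra).
  assert (Hqd : 0 <= q * d <= q * (2 * e)) by (split; nra).
  assert (He4 : 2 * q * ((INR m + 2) * e) <= 2 * q * ((INR m + 2) * (2 * (2 * q * eta))))
    by (apply Rmult_le_compat_l; [lra | apply Rmult_le_compat_l; lra]).
  apply Rabs_le. split; nra.
Qed.

(* D_{m+1} comes within eta of its supremum 2^{-(m+1)} on [0, oo): by eps_decay,
   the gap 1 - 2^{m+1} D_{m+1}(b) is at most 2^{m+1} eta at
   b = 2^{m+1} ln((m+1) / (2^m eta)). *)
Lemma deriv_near_sup (m : nat) (eta : R) : 0 < 2 ^ m * eta <= 1 ->
  exists b : R, 0 <= b /\ / 2 ^ S m - eta <= phi_iter_deriv (S m) b.
Proof.
  intros Hqeta. pose proof (pow_lt 2 m ltac:(lra)) as Hq. pose proof (pos_INR m) as Hm.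
  set (q := 2 ^ m) in *. change (2 ^ S m) with (2 * q).
  set (b := 2 * q * ln ((INR m + 1) / (q * eta))).
  assert (Hb : 0 <= b).
  { apply Rmult_le_pos; [lra|]. rewrite <- ln_1. apply ln_le; [lra|].
    apply (Rmult_le_reg_r (q * eta)); [lra|]. unfold Rdiv.
    rewrite Rmult_assoc, Rinv_l, Rmult_1_l, Rmult_1_r by lra. lra. }
  exists b. split; [exact Hb|].
  pose proof (deriv_gap_bounds m b Hb) as [_ Hup]. change (2 ^ S m) with (2 * q) in Hup.
  pose proof (eps_range m b Hb). pose proof (eps_decay m b Hb) as Hdecay. fold q in Hdecay.
  replace (exp (- (b / (2 * q)))) with (q * eta / (INR m + 1)) in Hdecay.
  2: { unfold b. replace (- (2 * q * ln ((INR m + 1) / (q * eta)) / (2 * q)))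
         with (ln (q * eta / (INR m + 1))) by (rewrite !ln_div by lra; field; lra).
       rewrite exp_ln; [reflexivity | apply Rdiv_lt_0_compat; lra]. }
  assert (Hsmall : eps m b + INR m * eps m b ^ 2 <= 2 * q * eta).
  { assert (INR m * eps m b ^ 2 <= INR m * eps m b) by (apply Rmult_le_compat_l; nra).
    assert (Hlin : (INR m + 1) * eps m b <= (INR m + 1) * (2 * (q * eta / (INR m + 1))))
      by (apply Rmult_le_compat_l; lra).
    replace ((INR m + 1) * (2 * (q * eta / (INR m + 1)))) with (2 * q * eta) in Hlin
      by (field; lra).
    lra. }
  apply (Rmult_le_reg_l (2 * q)); [lra|].
  replace (2 * q * (/ (2 * q) - eta)) with (1 - 2 * q * eta) by (field; lra). lra.
Qed.

(* For 0 < eta < 2^{-r} - 4^{-r}, the solution of D_r = 2^{-r} - eta lies in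
   [0, oo), since D_r(0) = 4^{-r}. *)
Lemma xi_star_large (r : nat) (eta : R) : (1 <= r)%nat -> 0 < eta < / 2 ^ r - / 4 ^ r ->
  0 <= xi_star r (/ 2 ^ r - eta)
  /\ phi_iter_deriv r (xi_star r (/ 2 ^ r - eta)) = / 2 ^ r - eta.
Proof.
  intros Hr Heta. destruct r as [|m]; [lia|].
  pose proof (pow_lt 2 m ltac:(lra)) as Hq.
  assert (H4 : / 4 ^ S m = / (2 ^ S m * 2 ^ S m))
    by (rewrite <- Rpow_mult_distr; f_equal; f_equal; ring).
  pose proof (phi_iter_deriv_0 (S m)) as HD0. rewrite H4 in HD0, Heta.
  assert (Hqeta : 0 < 2 ^ m * eta <= 1).
  { destruct Heta as [Heta0 Heta1]. split; [nra|].
    change (2 ^ S m) with (2 * 2 ^ m) in Heta1.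
    assert (Hinv : 0 < / (2 * 2 ^ m * (2 * 2 ^ m))) by (apply Rinv_0_lt_compat; nra).
    apply (Rmult_le_reg_r (/ 2 ^ m)); [apply Rinv_0_lt_compat; lra|].
    replace (2 ^ m * eta * / 2 ^ m) with eta by (field; lra). rewrite Rmult_1_l.
    assert (/ (2 * 2 ^ m) <= / 2 ^ m) by (apply Rinv_le_contravar; lra). lra. }
  destruct (deriv_near_sup m eta Hqeta) as (b & Hb & HDb).
  assert (HD0' : phi_iter_deriv (S m) 0 <= / 2 ^ S m - eta) by lra.
  destruct (xi_star_between (S m) _ 0 b Hr Hb (conj HD0' HDb)) as [[Hge _] Hval].
  split; assumption.
Qed.

Lemma large_eta_expansion (r : nat) (hr : (1 <= r)%nat) :
  exists C delta : R, 0 < C /\ 0 < delta /\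
     forall eta : R, 0 < eta < delta ->
       Rabs (xi_star r (/ 2 ^ r - eta)
             - (- 2 ^ r * ln (Rpower 2 (INR r - 1 + Rpower 2 (1 - INR r)) * eta)))
       <= C * eta.
Proof.
  pose proof (pow_lt 4 r ltac:(lra)) as H4. pose proof (pos_INR r).
  exists (2 * (INR r + 1) * 4 ^ r), (/ 2 ^ r - / 4 ^ r).
  split; [nra|]. split.
  - destruct r as [|m]; [lia|]. pose proof (pow_R1_Rle 2 m ltac:(lra)).
    apply Rlt_0_minus, Rinv_lt_contravar; [apply Rmult_lt_0_compat; apply pow_lt; lra|].
    replace (4 ^ S m) with (2 ^ S m * 2 ^ S m) by (rewrite <- Rpow_mult_distr; f_equal; ring).
    simpl. nra.
  - intros eta Heta.
    destruct (xi_star_large r eta hr Heta) as [Hge Hval].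
    pose proof (large_eta_error r _ hr Hge) as Herr.
    rewrite Hval in Herr. replace (/ 2 ^ r - (/ 2 ^ r - eta)) with eta in Herr by ring.
    exact Herr.
Qed.

Theorem theorem4p4 (r : nat) (hr : (1 <= r)%nat) :
  (exists C delta : R, 0 < C /\ 0 < delta /\
     forall eta : R, 0 < eta < delta ->
       Rabs (xi_star r eta
             - 2 * ln (4 ^ r * eta * sqrt (Psi_iter r 0 * prod_Psi r)))
       <= C * eta)
  /\
  (exists C delta : R, 0 < C /\ 0 < delta /\
     forall eta : R, 0 < eta < delta ->
       Rabs (xi_star r (/ 2 ^ r - eta)
             - (- 2 ^ r * ln (Rpower 2 (INR r - 1 + Rpower 2 (1 - INR r)) * eta)))
       <= C * eta).
Proof. split; [apply small_eta_expansion | apply large_eta_expansion]; exact hr. Qed.
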